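(* There is an absolute constant $\alpha>0$ such that the following holds. Let $n\ge 2$, $c\ge 1$, $0<\Delta\le c^2$, and let $W=(\vec v_i)_{i\in I}$ be a family of $|I|\le n$ vectors in $\mathbb{R}^D$ such that every vertex has expected degree at most $c$ in $G\sim\mathcal{G}_W$. Suppose there is $L>0$ with $L\ge \sqrt{\Delta}/(4c)$ such that $\|\vec v_i\|_2<2L$ for all $i\in I$ and at least $(\Delta/60c^2)(n/\lg n)$ indices $i\in I$ satisfy $\|\vec v_i\|_2\ge L$. Then the matrix whose columns are the $\vec v_i$ has rank at least $\alpha\,(\Delta^4/c^9)\, n/\lg^2 n$.
   Context: For a finite family of vectors $W=(\vec w_i)_{i\in I}$ in $\mathbb{R}^D$, $\mathcal{G}_W$ is the distribution on simple undirected graphs with vertex set $I$ in which, independently for each unordered pair $\{i,j\}$ with $i\neq j$, the edge $(i,j)$ is present with probability $\max(0,\min(\vec w_i\cdot\vec w_j,1))$. The expected degree of $i$ is $\sum_{j\ne i}\max(0,\min(\vec w_i\cdot\vec w_j,1))$. $\lg$ is the base-2 logarithm. *)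

From Stdlib Require Import Reals Lra List.
Import ListNotations.
Open Scope R_scope.

Definition rsum (l : list nat) (f : nat -> R) : R :=
  fold_right (fun i acc => f i + acc) 0 l.

(* A family of |I| = m vectors in R^D is encoded as v : nat -> nat -> R,
   where v i k is the k-th coordinate (k < D) of the i-th vector (i < m). *)
Definition dot (D : nat) (x y : nat -> R) : R :=
  rsum (seq 0 D) (fun k => x k * y k).

Definition norm2 (D : nat) (x : nat -> R) : R := sqrt (dot D x x).

Definition edge_prob (D : nat) (x y : nat -> R) : R :=
  Rmax 0 (Rmin (dot D x y) 1).

Definition expected_degree (D m : nat) (v : nat -> nat -> R) (i : nat) : R :=
  rsum (filter (fun j => negb (Nat.eqb j i)) (seq 0 m))
       (fun j => edge_prob D (v i) (v j)).

Definition count_long (D m : nat) (v : nat -> nat -> R) (L : R) : nat :=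
  length (filter (fun i => if Rle_dec L (norm2 D (v i)) then true else false)
                 (seq 0 m)).

Definition lg (x : R) : R := ln x / ln 2.

Definition lin_indep (D : nat) (v : nat -> nat -> R) (S : list nat) : Prop :=
  NoDup S /\
  forall a : nat -> R,
    (forall k, (k < D)%nat -> rsum S (fun i => a i * v i k) = 0) ->
    forall i, In i S -> a i = 0.

(* rank of the D x m matrix with columns v 0, ..., v (m-1):
   the maximal number of linearly independent columns.
   "rank >= r" is expressed as existence of r independent columns. *)
Definition rank_ge (D m : nat) (v : nat -> nat -> R) (r : R) : Prop :=
  exists S : list nat,
    incl S (seq 0 m) /\ lin_indep D v S /\ r <= INR (length S).

(* Write w_ij = |v_i . v_j| for the long vectors T.  Since v_i . v_j < 4L^2, each positive
   inner product is at most (1 + 4L^2) times the edge probability, so the positive parts of a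
   row sum to at most (1 + 4L^2) c; the Gram matrix being positive semidefinite, the negative
   parts are paid for by the diagonal.  Hence the total weight of T is O(|T| (c + L^2 c)).
   A greedy colouring of T with q ~ c/L^2 + c colours has a light colour class, and removing
   its heavy vertices leaves about |T|/(2q) vectors whose off-diagonal row sums are below
   L^2/2 <= |v_i|^2 / 2.  Such a diagonally dominant Gram matrix is nonsingular, so these
   vectors are independent.  As L^2 >= Delta/(16 c^2), q = O(c^3/Delta), and the rank is
   Omega(Delta^2 n / (c^5 lg n)), which is more than required. *)

From Stdlib Require Import Reals Lra Lia List ZArith.
Import ListNotations.
Open Scope R_scope.

(** * Finite sums *)

Lemma rsum_app l1 l2 f : rsum (l1 ++ l2) f = rsum l1 f + rsum l2 f.
Proof. induction l1; simpl; [lra | rewrite IHl1; lra]. Qed.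

Lemma rsum_ext_in l f g : (forall x, In x l -> f x = g x) -> rsum l f = rsum l g.
Proof. induction l; simpl; intros H; auto. rewrite H, IHl by auto; reflexivity. Qed.

Lemma rsum_ext l f g : (forall x, f x = g x) -> rsum l f = rsum l g.
Proof. intros; apply rsum_ext_in; auto. Qed.

Lemma rsum_le l f g : (forall x, In x l -> f x <= g x) -> rsum l f <= rsum l g.
Proof.
  induction l; simpl; intros H; [lra|].
  assert (rsum l f <= rsum l g) by (apply IHl; auto).
  pose proof (H a (or_introl eq_refl)); lra.
Qed.

Lemma rsum_zero l f : (forall x, In x l -> f x = 0) -> rsum l f = 0.
Proof. induction l; simpl; intros H; auto. rewrite H, IHl; auto; lra. Qed.

Lemma rsum_nonneg l f : (forall x, In x l -> 0 <= f x) -> 0 <= rsum l f.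
Proof.
  intros H; rewrite <- (rsum_zero l (fun _ => 0)) by auto.
  apply rsum_le; auto.
Qed.

Lemma rsum_plus l f g : rsum l (fun x => f x + g x) = rsum l f + rsum l g.
Proof. induction l; simpl; lra. Qed.

Lemma rsum_minus l f g : rsum l (fun x => f x - g x) = rsum l f - rsum l g.
Proof. induction l; simpl; lra. Qed.

Lemma rsum_scal l a f : rsum l (fun x => a * f x) = a * rsum l f.
Proof. induction l; simpl; lra. Qed.

Lemma rsum_const l C : rsum l (fun _ => C) = INR (length l) * C.
Proof. induction l; simpl length; rewrite ?S_INR; simpl; lra. Qed.

Lemma rsum_swap l1 l2 (F : nat -> nat -> R) :
  rsum l1 (fun i => rsum l2 (F i)) = rsum l2 (fun j => rsum l1 (fun i => F i j)).
Proof.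
  induction l1; simpl; [rewrite rsum_zero; auto|].
  rewrite IHl1, <- rsum_plus; reflexivity.
Qed.

Lemma rsum_abs l f : Rabs (rsum l f) <= rsum l (fun x => Rabs (f x)).
Proof.
  induction l; simpl; [rewrite Rabs_R0; lra|].
  eapply Rle_trans; [apply Rabs_triang | lra].
Qed.

Lemma rsum_filter (p : nat -> bool) l f :
  rsum (filter p l) f = rsum l (fun j => if p j then f j else 0).
Proof. induction l; simpl; auto. destruct (p a); simpl; lra. Qed.

Lemma length_filter_rsum (p : nat -> bool) l :
  INR (length (filter p l)) = rsum l (fun j => if p j then 1 else 0).
Proof. rewrite <- (Rmult_1_r (INR _)), <- rsum_const, rsum_filter; reflexivity. Qed.

Lemma rsum_split_at l i F : NoDup l -> In i l ->
  rsum l F = F i + rsum l (fun j => if Nat.eqb j i then 0 else F j).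
Proof.
  induction l; simpl; intros Hnd Hi; [tauto|]. inversion Hnd; subst.
  destruct Hi as [<- | Hi].
  - rewrite Nat.eqb_refl, Rplus_0_l; f_equal. apply rsum_ext_in.
    intros x Hx; destruct (Nat.eqb_spec x a); subst; tauto.
  - destruct (Nat.eqb_spec a i); [subst; tauto|]. rewrite (IHl H2 Hi); lra.
Qed.

Lemma rsum_delta q a y : (a < q)%nat ->
  rsum (seq 0 q) (fun k => if Nat.eqb a k then y else 0) = y.
Proof.
  induction q; intros Ha; [lia|]. rewrite seq_S, rsum_app; simpl.
  destruct (Nat.eqb_spec a q).
  - subst. rewrite rsum_zero; [lra|].
    intros x Hx; apply in_seq in Hx. destruct (Nat.eqb_spec q x); [lia | auto].
  - rewrite IHq by lia; lra.
Qed.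

Lemma exists_argmax l (f : nat -> R) :
  l <> [] -> exists i, In i l /\ forall j, In j l -> f j <= f i.
Proof.
  induction l as [|a l IH]; [tauto|]. intros _. destruct l as [|b l'].
  - exists a. split; simpl; auto. intros j [<- | []]; lra.
  - destruct IH as [i [Hi Hmax]]; [congruence|]. destruct (Rle_dec (f a) (f i)).
    + exists i. split; [simpl; auto|]. intros j [<- | Hj]; auto.
    + exists a. split; [simpl; auto|]. intros j [<- | Hj]; [lra|]. specialize (Hmax j Hj); lra.
Qed.

Lemma exists_ge_average q g : (1 <= q)%nat ->
  exists k, (k < q)%nat /\ rsum (seq 0 q) g <= INR q * g k.
Proof.
  intros Hq. destruct (exists_argmax (seq 0 q) g) as [k [Hk Hmax]].
  { destruct q; [lia | discriminate]. }
  exists k. split; [apply in_seq in Hk; lia|].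
  rewrite <- (length_seq q 0) at 2. rewrite <- rsum_const. apply rsum_le; auto.
Qed.

Lemma exists_le_average q g : (1 <= q)%nat ->
  exists k, (k < q)%nat /\ INR q * g k <= rsum (seq 0 q) g.
Proof.
  intros Hq. destruct (exists_ge_average q (fun k => - g k) Hq) as [k [Hk H]].
  exists k. split; auto.
  rewrite (rsum_ext _ _ (fun k => -1 * g k)), rsum_scal in H by (intros; ring). lra.
Qed.

Lemma rsum_colour_classes q (f : nat -> nat) T (F : nat -> R) : (forall i, (f i < q)%nat) ->
  rsum (seq 0 q) (fun k => rsum T (fun j => if Nat.eqb (f j) k then F j else 0)) = rsum T F.
Proof. intros Hf. rewrite <- rsum_swap. apply rsum_ext; intros j. apply rsum_delta; auto. Qed.

(** * Sparse induced subsets of a weighted graph *)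

Section WeightedGraph.

Variable w : nat -> nat -> R.
Hypothesis w_nonneg : forall i j, 0 <= w i j.
Hypothesis w_sym : forall i j, w i j = w j i.

Fixpoint pair_weight (T : list nat) : R :=
  match T with [] => 0 | x :: T' => rsum T' (w x) + pair_weight T' end.

Fixpoint mono_weight (f : nat -> nat) (T : list nat) : R :=
  match T with
  | [] => 0
  | x :: T' => rsum T' (fun j => if Nat.eqb (f j) (f x) then w x j else 0) + mono_weight f T'
  end.

Definition row (S : list nat) (i : nat) : R :=
  rsum S (fun j => if Nat.eqb j i then 0 else w i j).

Definition colour_class (f : nat -> nat) (k : nat) (T : list nat) : list nat :=
  filter (fun j => Nat.eqb (f j) k) T.

Lemma row_nonneg S i : 0 <= row S i.
Proof. apply rsum_nonneg; intros j _; destruct (Nat.eqb j i); auto; lra. Qed.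

Lemma rsum_row S : NoDup S -> rsum S (row S) = 2 * pair_weight S.
Proof.
  induction S as [|x S IH]; intros Hnd; simpl; [unfold row; simpl; lra|].
  inversion Hnd; subst. unfold row at 1; simpl. rewrite Nat.eqb_refl.
  rewrite (rsum_ext_in S (fun j => if Nat.eqb j x then 0 else w x j) (w x))
    by (intros j Hj; destruct (Nat.eqb_spec j x); subst; tauto).
  rewrite (rsum_ext_in S (row (x :: S)) (fun i => w x i + row S i)).
  - rewrite rsum_plus, IH by auto. lra.
  - intros i Hi. unfold row; simpl. destruct (Nat.eqb_spec x i); [subst; tauto|].
    rewrite w_sym; reflexivity.
Qed.

Lemma row_filter_le S p i : row (filter p S) i <= row S i.
Proof.
  unfold row. rewrite rsum_filter. apply rsum_le. intros j _.
  destruct (p j), (Nat.eqb j i); auto; lra.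
Qed.

(* Markov's inequality: at most [rsum S (row S) / th] vertices of [S] are heavy. *)
Lemma exists_row_sparse_sublist S th : 0 < th -> NoDup S ->
  exists S', incl S' S /\ NoDup S' /\ (forall i, In i S' -> row S' i < th) /\
    INR (length S) - rsum S (row S) / th <= INR (length S').
Proof.
  intros Hth Hnd. set (light i := if Rlt_dec (row S i) th then true else false).
  exists (filter light S). split; [|split; [|split]].
  - intros i Hi; apply filter_In in Hi; tauto.
  - apply NoDup_filter; auto.
  - intros i Hi. apply filter_In in Hi as [_ Hi]. unfold light in Hi.
    destruct (Rlt_dec (row S i) th); [|discriminate].
    eapply Rle_lt_trans; [apply row_filter_le | auto].
  - rewrite length_filter_rsum, <- (Rmult_1_r (INR _)), <- rsum_const.
    unfold Rdiv. rewrite Rmult_comm, <- rsum_scal, <- rsum_minus.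
    apply rsum_le. intros i _. unfold light. pose proof (row_nonneg S i).
    assert (0 < / th) by (apply Rinv_0_lt_compat; auto).
    destruct (Rlt_dec (row S i) th); [nra|].
    assert (1 <= / th * row S i); [|lra].
    apply Rmult_le_reg_l with th; auto. rewrite <- Rmult_assoc, Rinv_r; lra.
Qed.

Lemma mono_weight_ext_in f g T :
  (forall j, In j T -> f j = g j) -> mono_weight f T = mono_weight g T.
Proof.
  induction T; simpl; intros H; auto. rewrite IHT by auto. f_equal.
  apply rsum_ext_in. intros j Hj. rewrite (H j), (H a); auto.
Qed.

(* Greedy colouring: each vertex takes the colour minimising its weight to the
   vertices already coloured. *)
Lemma exists_colouring q T : NoDup T -> (1 <= q)%nat ->
  exists f, (forall i, (f i < q)%nat) /\ INR q * mono_weight f T <= pair_weight T.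
Proof.
  intros Hnd Hq. induction T as [|x T IH].
  - exists (fun _ => 0%nat). split; [intros; lia | simpl; lra].
  - inversion Hnd; subst. destruct (IH H2) as [f [Hf Hmono]].
    set (g k := rsum T (fun j => if Nat.eqb (f j) k then w x j else 0)).
    destruct (exists_le_average q g Hq) as [k [Hk Hg]].
    assert (Hsum : rsum (seq 0 q) g = rsum T (w x)) by (apply rsum_colour_classes; auto).
    exists (fun j => if Nat.eqb j x then k else f j). split.
    + intros i; destruct (Nat.eqb i x); auto.
    + simpl. rewrite Nat.eqb_refl.
      rewrite (mono_weight_ext_in _ f)
        by (intros j Hj; destruct (Nat.eqb_spec j x); subst; tauto).
      replace (rsum T _) with (g k).
      * rewrite Rmult_plus_distr_l. lra.
      * apply rsum_ext_in. intros j Hj; destruct (Nat.eqb_spec j x); subst; tauto.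
Qed.

Lemma rsum_mono_weight_classes q f T : (forall i, (f i < q)%nat) ->
  rsum (seq 0 q) (fun k => mono_weight f (colour_class f k T)) = mono_weight f T.
Proof.
  intros Hf. induction T as [|x T IH]; simpl; [apply rsum_zero; auto|].
  rewrite <- IH, <- (rsum_delta q (f x) (rsum T _)), <- rsum_plus by auto.
  apply rsum_ext. intros k. unfold colour_class; simpl.
  destruct (Nat.eqb_spec (f x) k); simpl; [|lra].
  subst. f_equal. rewrite rsum_filter. apply rsum_ext; intros j.
  destruct (Nat.eqb (f j) (f x)); reflexivity.
Qed.

Lemma rsum_length_classes q f T : (forall i, (f i < q)%nat) ->
  rsum (seq 0 q) (fun k => INR (length (colour_class f k T))) = INR (length T).
Proof.
  intros Hf. unfold colour_class.
  rewrite (rsum_ext _ _ (fun k => rsum T (fun j => if Nat.eqb (f j) k then 1 else 0)))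
    by (intros; apply length_filter_rsum).
  rewrite rsum_colour_classes, rsum_const by auto. lra.
Qed.

Lemma mono_weight_monochrome f k S :
  (forall j, In j S -> f j = k) -> mono_weight f S = pair_weight S.
Proof.
  induction S as [|x S IH]; simpl; intros Hk; auto.
  rewrite IH by auto. f_equal. apply rsum_ext_in; intros j Hj.
  rewrite (Hk j), (Hk x), Nat.eqb_refl; auto.
Qed.

Lemma exists_light_class T q beta : NoDup T -> (1 <= q)%nat -> 0 <= beta ->
  exists S, incl S T /\ NoDup S /\
    INR (length T) - beta * pair_weight T / INR q <=
    INR q * (INR (length S) - beta * pair_weight S).
Proof.
  intros Hnd Hq Hbeta. destruct (exists_colouring q T Hnd Hq) as [f [Hf Hmono]].
  set (h k := INR (length (colour_class f k T)) - beta * mono_weight f (colour_class f k T)).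
  destruct (exists_ge_average q h Hq) as [k [Hk Hh]].
  exists (colour_class f k T). split; [|split].
  - intros i Hi; apply filter_In in Hi; tauto.
  - apply NoDup_filter; auto.
  - assert (Hk' : forall j, In j (colour_class f k T) -> f j = k)
      by (intros j Hj; apply filter_In in Hj as [_ Hj]; apply Nat.eqb_eq; auto).
    unfold h in Hh. rewrite rsum_minus, rsum_scal, rsum_length_classes,
      rsum_mono_weight_classes, (mono_weight_monochrome f k _ Hk') in Hh by auto.
    assert (0 < INR q) by (apply lt_0_INR; lia).
    assert (beta * mono_weight f T <= beta * pair_weight T / INR q); [|lra].
    apply Rmult_le_reg_l with (INR q); auto. field_simplify; [nra | lra].
Qed.

Lemma exists_row_sparse_subset T q th : NoDup T -> (1 <= q)%nat -> 0 < th ->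
  exists S, incl S T /\ NoDup S /\ (forall i, In i S -> row S i < th) /\
    INR (length T) - rsum T (row T) / (INR q * th) <= INR q * INR (length S).
Proof.
  intros Hnd Hq Hth.
  assert (Hbeta : 0 <= 2 / th) by (apply Rle_mult_inv_pos; lra).
  destruct (exists_light_class T q (2 / th) Hnd Hq Hbeta) as [S [HST [HSnd Hlight]]].
  destruct (exists_row_sparse_sublist S th Hth HSnd) as [S' [HS' [HS'nd [Hrow Hlen]]]].
  exists S'. split; [intros i Hi; auto|split; [auto|split; auto]].
  rewrite rsum_row in Hlen |- * by auto.
  assert (0 < INR q) by (apply lt_0_INR; lia).
  replace (2 * pair_weight T / (INR q * th)) with (2 / th * pair_weight T / INR q) by (field; lra).
  replace (2 * pair_weight S / th) with (2 / th * pair_weight S) in Hlen by (field; lra).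
  apply Rmult_le_compat_l with (r := INR q) in Hlen; lra.
Qed.

End WeightedGraph.

(** * Gram matrices *)

Lemma dot_comm D x y : dot D x y = dot D y x.
Proof. unfold dot; apply rsum_ext; intros; lra. Qed.

Lemma dot_self_nonneg D x : 0 <= dot D x x.
Proof. unfold dot; apply rsum_nonneg; intros; nra. Qed.

Lemma norm2_sqr D x : norm2 D x ^ 2 = dot D x x.
Proof. unfold norm2; rewrite <- Rsqr_pow2; apply Rsqr_sqrt, dot_self_nonneg. Qed.

Lemma two_dot_le D x y : 2 * dot D x y <= dot D x x + dot D y y.
Proof.
  unfold dot. rewrite <- rsum_plus, <- rsum_scal.
  apply rsum_le; intros k _. pose proof (pow2_ge_0 (x k - y k)); nra.
Qed.

(* The Gram matrix is positive semidefinite: the double sum is [|sum_i v_i|^2]. *)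
Lemma rsum_gram_nonneg D v T :
  0 <= rsum T (fun i => rsum T (fun j => dot D (v i) (v j))).
Proof.
  unfold dot.
  rewrite (rsum_ext T _ (fun i => rsum (seq 0 D) (fun k => v i k * rsum T (fun j => v j k)))).
  - rewrite rsum_swap. apply rsum_nonneg. intros k _.
    rewrite (rsum_ext T _ (fun i => rsum T (fun j => v j k) * v i k)) by (intros; lra).
    rewrite rsum_scal. nra.
  - intros i. rewrite rsum_swap. apply rsum_ext; intros k. apply rsum_scal.
Qed.

Lemma dot_lin_comb D v S a i :
  (forall k, (k < D)%nat -> rsum S (fun j => a j * v j k) = 0) ->
  rsum S (fun j => a j * dot D (v i) (v j)) = 0.
Proof.
  intros H. unfold dot.
  rewrite (rsum_ext S _ (fun j => rsum (seq 0 D) (fun k => v i k * (a j * v j k)))).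
  - rewrite rsum_swap. apply rsum_zero. intros k Hk. apply in_seq in Hk.
    rewrite rsum_scal, H by lia. lra.
  - intros j. rewrite <- rsum_scal. apply rsum_ext; intros; lra.
Qed.

Definition abs_gram (D : nat) (v : nat -> nat -> R) (i j : nat) : R :=
  Rabs (dot D (v i) (v j)).

(* In a vanishing combination, the coefficient of largest modulus is bounded by the
   others through the row of [i], which is strictly smaller than the diagonal entry. *)
Lemma diag_dominant_lin_indep D v S : NoDup S ->
  (forall i, In i S -> row (abs_gram D v) S i < dot D (v i) (v i)) ->
  lin_indep D v S.
Proof.
  intros Hnd Hdom. split; auto. intros a Ha.
  destruct S as [|s S]; [intros _ []|].
  destruct (exists_argmax (s :: S) (fun j => Rabs (a j))) as [i [Hi Hmax]]; [congruence|].
  assert (Hai : a i = 0).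
  { pose proof (dot_lin_comb D v _ a i Ha) as E.
    rewrite (rsum_split_at _ i) in E by auto.
    set (rest := rsum (s :: S) _) in E.
    assert (Hrest : Rabs rest <= Rabs (a i) * row (abs_gram D v) (s :: S) i).
    { eapply Rle_trans; [apply rsum_abs|]. unfold row. rewrite <- rsum_scal.
      apply rsum_le. intros j Hj. destruct (Nat.eqb j i); [rewrite Rabs_R0; lra|].
      unfold abs_gram. rewrite Rabs_mult. apply Rmult_le_compat_r; [apply Rabs_pos | auto]. }
    assert (Hdiag : Rabs (a i) * dot D (v i) (v i) = Rabs rest).
    { rewrite <- (Rabs_right (dot D (v i) (v i))) by (apply Rle_ge, dot_self_nonneg).
      rewrite <- Rabs_mult, <- Rabs_Ropp. f_equal; lra. }
    destruct (Req_dec (a i) 0) as [|Hne]; auto. exfalso.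
    pose proof (Rabs_pos_lt _ Hne). pose proof (Hdom i Hi). nra. }
  intros j Hj. specialize (Hmax j Hj). rewrite Hai, Rabs_R0 in Hmax.
  destruct (Req_dec (a j) 0) as [|Hne]; auto.
  pose proof (Rabs_pos_lt _ Hne). lra.
Qed.

Lemma pos_dot_le_edge_prob D x y K : dot D x y < K -> 0 <= K ->
  Rmax 0 (dot D x y) <= (1 + K) * edge_prob D x y.
Proof.
  intros H HK. unfold edge_prob, Rmax at 1, Rmin.
  destruct (Rle_dec 0 (dot D x y)); [|apply Rmult_le_pos; [lra | apply Rmax_l]].
  destruct (Rle_dec (dot D x y) 1); rewrite Rmax_right by lra; nra.
Qed.

Lemma row_edge_prob_le_expected_degree D m v (p : nat -> bool) i :
  row (fun i j => edge_prob D (v i) (v j)) (filter p (seq 0 m)) i <= expected_degree D m v i.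
Proof.
  unfold row, expected_degree. rewrite !rsum_filter. apply rsum_le. intros j _.
  assert (0 <= edge_prob D (v i) (v j)) by apply Rmax_l.
  destruct (p j), (Nat.eqb j i); simpl; lra.
Qed.

(* Write [|t| = 2 max(0,t) - t]: the positive parts are controlled by the edge
   probabilities, and the negative parts by positive semidefiniteness. *)
Lemma rsum_row_abs_gram_le D v T c K : NoDup T -> 0 <= K ->
  (forall i, In i T -> dot D (v i) (v i) < K) ->
  (forall i, In i T -> row (fun i j => edge_prob D (v i) (v j)) T i <= c) ->
  rsum T (row (abs_gram D v) T) <= INR (length T) * (2 * (1 + K) * c + K).
Proof.
  intros Hnd HK Hdiag Hdeg.
  assert (E : forall i, row (abs_gram D v) T i =
    2 * row (fun i j => Rmax 0 (dot D (v i) (v j))) T i - row (fun i j => dot D (v i) (v j)) T i).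
  { intros i. unfold row. rewrite <- rsum_scal, <- rsum_minus. apply rsum_ext; intros j.
    destruct (Nat.eqb j i); [lra|]. unfold abs_gram, Rmax, Rabs.
    destruct (Rle_dec 0 _), (Rcase_abs _); lra. }
  rewrite (rsum_ext T _ _ E), rsum_minus, rsum_scal.
  assert (Hpos : rsum T (row (fun i j => Rmax 0 (dot D (v i) (v j))) T) <= INR (length T) * ((1 + K) * c)).
  { rewrite <- rsum_const. apply rsum_le. intros i Hi.
    apply Rle_trans with ((1 + K) * row (fun i j => edge_prob D (v i) (v j)) T i).
    - unfold row. rewrite <- rsum_scal. apply rsum_le. intros j Hj. destruct (Nat.eqb j i); [lra|].
      apply pos_dot_le_edge_prob; auto.
      pose proof (two_dot_le D (v i) (v j)). pose proof (Hdiag i Hi). pose proof (Hdiag j Hj). lra.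
    - apply Rmult_le_compat_l; [lra | auto]. }
  assert (Hneg : - (INR (length T) * K) <= rsum T (row (fun i j => dot D (v i) (v j)) T)).
  { rewrite (rsum_ext_in T _ (fun i => rsum T (fun j => dot D (v i) (v j)) - dot D (v i) (v i))).
    - rewrite rsum_minus. pose proof (rsum_gram_nonneg D v T).
      assert (rsum T (fun i => dot D (v i) (v i)) <= INR (length T) * K); [|lra].
      rewrite <- rsum_const. apply rsum_le. intros; apply Rlt_le; auto.
    - intros i Hi. unfold row. rewrite (rsum_split_at T i (fun j => dot D (v i) (v j))) by auto. lra. }
  lra.
Qed.

(** * Independent long vectors *)

Definition is_long (D : nat) (v : nat -> nat -> R) (L : R) (i : nat) : bool :=
  if Rle_dec L (norm2 D (v i)) then true else false.

Lemma rank_ge_weaken D m v r r' : r' <= r -> rank_ge D m v r -> rank_ge D m v r'.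
Proof. intros Hr [S [HS [Hind Hlen]]]. exists S. split; [|split]; auto; lra. Qed.

Lemma exists_nat_between x : 0 < x -> exists q, (1 <= q)%nat /\ x <= INR q <= x + 1.
Proof.
  intros Hx. destruct (archimed x) as [Hup1 Hup2].
  assert (Hz : (0 < up x)%Z) by (apply lt_IZR; lra).
  exists (Z.to_nat (up x)). rewrite INR_IZR_INZ, Z2Nat.id by lia.
  split; [lia | lra].
Qed.

Lemma rsum_row_abs_gram_filter_le D m v (p : nat -> bool) c L :
  (forall i, (i < m)%nat -> expected_degree D m v i <= c) ->
  (forall i, (i < m)%nat -> norm2 D (v i) < 2 * L) ->
  let T := filter p (seq 0 m) in
  rsum T (row (abs_gram D v) T) <= INR (length T) * (2 * (1 + 4 * L ^ 2) * c + 4 * L ^ 2).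
Proof.
  intros Hdeg Hnorm T.
  assert (HT : forall i, In i T -> (i < m)%nat)
    by (intros i Hi; apply filter_In in Hi as [Hi _]; apply in_seq in Hi; lia).
  apply rsum_row_abs_gram_le; [apply NoDup_filter, seq_NoDup | pose proof (pow2_ge_0 L); lra | |].
  - intros i Hi. pose proof (Hnorm i (HT i Hi)). rewrite <- norm2_sqr.
    assert (0 <= norm2 D (v i)) by apply sqrt_pos. nra.
  - intros i Hi. eapply Rle_trans; [apply row_edge_prob_le_expected_degree | auto].
Qed.

Lemma rank_ge_long_vectors D m v c L : 1 <= c -> 0 < L ->
  (forall i, (i < m)%nat -> expected_degree D m v i <= c) ->
  (forall i, (i < m)%nat -> norm2 D (v i) < 2 * L) ->
  rank_ge D m v (INR (count_long D m v L) / (2 * (8 * c / L ^ 2 + 48 * c + 1))).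
Proof.
  intros Hc HL Hdeg Hnorm.
  set (T := filter (is_long D v L) (seq 0 m)).
  change (count_long D m v L) with (length T).
  assert (HTnd : NoDup T) by (apply NoDup_filter, seq_NoDup).
  assert (HT : forall i, In i T -> (i < m)%nat /\ L ^ 2 <= dot D (v i) (v i)).
  { intros i Hi. apply filter_In in Hi as [Hi Hlong]. apply in_seq in Hi.
    unfold is_long in Hlong. destruct (Rle_dec L (norm2 D (v i))); [|discriminate].
    rewrite <- norm2_sqr. split; [lia | apply pow_incr; lra]. }
  assert (HL2 : 0 < L ^ 2) by (apply pow_lt; auto).
  set (x := 8 * c / L ^ 2 + 48 * c).
  assert (Hx : 0 < x) by (unfold x; apply Rplus_le_lt_0_compat; [apply Rlt_le, Rdiv_lt_0_compat|]; lra).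
  destruct (exists_nat_between x Hx) as [q [Hq [Hxq Hqx]]].
  assert (Hw0 : forall i j, 0 <= abs_gram D v i j) by (intros; apply Rabs_pos).
  assert (Hws : forall i j, abs_gram D v i j = abs_gram D v j i)
    by (intros; unfold abs_gram; rewrite dot_comm; reflexivity).
  assert (Hth : 0 < L ^ 2 / 2) by lra.
  destruct (exists_row_sparse_subset _ Hw0 Hws T q _ HTnd Hq Hth) as [S [HST [HSnd [Hrow Hsize]]]].
  exists S. split; [|split].
  - intros i Hi. destruct (HT i (HST i Hi)) as [Him _]. apply in_seq; lia.
  - apply diag_dominant_lin_indep; auto. intros i Hi.
    destruct (HT i (HST i Hi)) as [_ Hlong]. pose proof (Hrow i Hi). lra.
  - set (t := INR (length T)) in *.
    assert (HW : rsum T (row (abs_gram D v) T) <= t * (2 * (1 + 4 * L ^ 2) * c + 4 * L ^ 2))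
      by (apply rsum_row_abs_gram_filter_le; auto).
    assert (Ht : 0 <= t) by apply pos_INR.
    assert (HB : 4 * (2 * (1 + 4 * L ^ 2) * c + 4 * L ^ 2) <= INR q * L ^ 2).
    { apply Rle_trans with (x * L ^ 2); [|nra].
      replace (x * L ^ 2) with (8 * c + 48 * c * L ^ 2) by (unfold x; field; lra). nra. }
    assert (Hheavy : rsum T (row (abs_gram D v) T) / (INR q * (L ^ 2 / 2)) <= t / 2).
    { unfold Rdiv at 1. apply Rmult_le_reg_r with (INR q * (L ^ 2 / 2)); [nra|].
      rewrite Rmult_assoc, Rinv_l, Rmult_1_r by nra. nra. }
    assert (Hhalf : t / 2 <= (x + 1) * INR (length S)) by (pose proof (pos_INR (length S)); nra).
    unfold Rdiv. apply Rmult_le_reg_r with (2 * (x + 1)); [lra|].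
    rewrite Rmult_assoc, Rinv_l, Rmult_1_r by lra. lra.
Qed.

Lemma colour_count_le c Delta L : 1 <= c -> 0 < Delta -> Delta <= c ^ 2 -> 0 < L ->
  sqrt Delta / (4 * c) <= L ->
  2 * (8 * c / L ^ 2 + 48 * c + 1) <= 354 * c ^ 3 / Delta.
Proof.
  intros Hc HD HDc HL HLD.
  assert (HL2 : Delta / (16 * c ^ 2) <= L ^ 2).
  { rewrite <- (pow2_sqrt Delta) by lra.
    replace (sqrt Delta ^ 2 / (16 * c ^ 2)) with ((sqrt Delta / (4 * c)) ^ 2) by (field; lra).
    apply pow_incr. split; [|auto]. apply Rle_mult_inv_pos; [apply sqrt_pos | lra]. }
  assert (H1 : 8 * c / L ^ 2 <= 128 * c ^ 3 / Delta).
  { apply Rle_trans with (8 * c / (Delta / (16 * c ^ 2))).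
    - apply Rmult_le_compat_l; [lra|]. apply Rinv_le_contravar; auto.
      apply Rdiv_lt_0_compat; nra.
    - right. field. lra. }
  assert (H2 : 48 * c + 1 <= 49 * c ^ 3 / Delta).
  { apply Rmult_le_reg_r with Delta; auto. field_simplify; [|lra]. nra. }
  lra.
Qed.

Lemma rank_bound_le c Delta N G t Q :
  1 <= c -> 0 < Delta -> Delta <= c ^ 2 -> 0 <= N -> 1 <= G ->
  Delta / (60 * c ^ 2) * (N / G) <= t -> 0 < Q -> Q <= 354 * c ^ 3 / Delta ->
  / 21240 * (Delta ^ 4 / c ^ 9) * N / G ^ 2 <= t / Q.
Proof.
  intros Hc HD HDc HN HG Ht HQ HQc.
  assert (Hc2 : 0 < c ^ 2) by nra.
  assert (Hc3 : 0 < c ^ 3) by (apply pow_lt; lra).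
  assert (HD2 : Delta ^ 2 <= c ^ 4) by (replace (c ^ 4) with ((c ^ 2) ^ 2) by ring; apply pow_incr; lra).
  assert (Ht0 : 0 <= t).
  { eapply Rle_trans; [|exact Ht]. apply Rmult_le_pos; apply Rle_mult_inv_pos; lra. }
  assert (HtQ : t * Delta / (354 * c ^ 3) <= t / Q).
  { assert (HQD : Q * Delta <= 354 * c ^ 3).
    { replace (354 * c ^ 3) with (354 * c ^ 3 / Delta * Delta) by (field; lra).
      apply Rmult_le_compat_r; lra. }
    replace (t / Q) with (t * Delta / (354 * c ^ 3) + t * (354 * c ^ 3 - Q * Delta) / (354 * c ^ 3 * Q))
      by (field; lra).
    assert (0 <= t * (354 * c ^ 3 - Q * Delta) / (354 * c ^ 3 * Q)) by (apply Rle_mult_inv_pos; nra).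
    lra. }
  assert (Hlow : Delta ^ 2 * N / (21240 * c ^ 5 * G) <= t * Delta / (354 * c ^ 3)).
  { replace (Delta ^ 2 * N / (21240 * c ^ 5 * G))
      with (Delta / (60 * c ^ 2) * (N / G) * Delta / (354 * c ^ 3)) by (field; lra).
    apply Rmult_le_compat_r; [apply Rlt_le, Rinv_0_lt_compat; lra|].
    apply Rmult_le_compat_r; lra. }
  assert (Hweak : / 21240 * (Delta ^ 4 / c ^ 9) * N / G ^ 2 <= Delta ^ 2 * N / (21240 * c ^ 5 * G)).
  { replace (/ 21240 * (Delta ^ 4 / c ^ 9) * N / G ^ 2)
      with (Delta ^ 2 * N / (21240 * c ^ 5 * G) * (Delta ^ 2 / c ^ 4 / G)) by (field; lra).
    rewrite <- (Rmult_1_r (Delta ^ 2 * N / (21240 * c ^ 5 * G))) at 2.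
    apply Rmult_le_compat_l.
    - apply Rle_mult_inv_pos; [nra|]. apply Rmult_lt_0_compat; [nra | lra].
    - assert (Hc4 : 0 < c ^ 4) by nra.
      replace 1 with (c ^ 4 * G / (c ^ 4 * G)) by (field; lra).
      replace (Delta ^ 2 / c ^ 4 / G) with (Delta ^ 2 / (c ^ 4 * G)) by (field; lra).
      apply Rmult_le_compat_r; [apply Rlt_le, Rinv_0_lt_compat|]; nra. }
  lra.
Qed.

Lemma lg_ge_1 n : (2 <= n)%nat -> 1 <= lg (INR n).
Proof.
  intros Hn. unfold lg. assert (Hl2 : 0 < ln 2) by (rewrite <- ln_1; apply ln_increasing; lra).
  assert (H2n : 2 <= INR n) by (replace 2 with (INR 2) by (simpl; lra); apply le_INR; auto).
  apply Rmult_le_reg_r with (ln 2); auto. field_simplify; [|lra].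
  destruct H2n as [H2n | <-]; [left; apply ln_increasing|]; lra.
Qed.

Theorem mainTheorem9 :
  exists alpha : R, 0 < alpha /\
  forall (n : nat) (c Delta : R) (D m : nat) (v : nat -> nat -> R) (L : R),
    (2 <= n)%nat -> 1 <= c -> 0 < Delta -> Delta <= c ^ 2 ->
    (m <= n)%nat ->
    (forall i, (i < m)%nat -> expected_degree D m v i <= c) ->
    0 < L -> sqrt Delta / (4 * c) <= L ->
    (forall i, (i < m)%nat -> norm2 D (v i) < 2 * L) ->
    (Delta / (60 * c ^ 2)) * (INR n / lg (INR n)) <= INR (count_long D m v L) ->
    rank_ge D m v (alpha * (Delta ^ 4 / c ^ 9) * INR n / (lg (INR n)) ^ 2).
Proof.
  exists (/ 21240). split; [lra|].
  intros n c Delta D m v L Hn Hc HD HDc _ Hdeg HL HLD Hnorm Hcount.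
  eapply rank_ge_weaken; [|apply (rank_ge_long_vectors D m v c L); auto].
  assert (HL2 : 0 < L ^ 2) by (apply pow_lt; auto).
  assert (0 <= 8 * c / L ^ 2) by (apply Rle_mult_inv_pos; lra).
  apply rank_bound_le; auto using pos_INR, lg_ge_1; [lra|].
  apply colour_count_le; auto.
Qed.
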